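(* Let $H$ be a graph and $q\in\mathbb N$, and suppose $H\otimes J_q$ contains a matching-linked set $X$. Then $\gamma(H)\ge \frac13\cdot |X|/q$.
   Context: Blowup: for a graph $H$ and $t\in\mathbb N$, $H\otimes J_t$ has vertices $v^{(i)}$ for $v\in V(H)$, $i\in[t]$, and edges $u^{(i)}v^{(j)}$ for all $uv\in E(H)$, $i,j\in[t]$, together with $u^{(i)}u^{(j)}$ for all $u\in V(H)$, $i\neq j\in[t]$. A matching on a vertex set $X$ is a set of pairwise disjoint unordered pairs of distinct vertices of $X$ (not necessarily edges of the graph). For a graph $H'$ and a multigraph $M$ with $V(M)\subseteq V(H')$, an $M$-linkage in $H'$ is a family of paths $(P_e)_{e\in E(M)}$ in $H'$ such that $P_e$ has the endpoints of $e$ as its endpoints; it is uncongested if every vertex lies on at most one of the paths. $X\subseteq V(H')$ is matching-linked in $H'$ if $H'$ contains an uncongested $M$-linkage for every matching $M$ on $X$. Linkage capacity: $\gamma(H)$ is the supremum of all $c>0$ such that for all sufficiently large $t\in\mathbb N$ the blowup $H\otimes J_t$ contains a matching-linked set of size $\lfloor ct\rfloor$. *)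

From HB Require Import structures.
From mathcomp Require Import all_boot all_order all_algebra.
From mathcomp Require Import boolp classical_sets reals.
Set Implicit Arguments. Unset Strict Implicit. Unset Printing Implicit Defensive.
Import Order.TTheory GRing.Theory Num.Theory.

Definition simple_graph (T : finType) (e : rel T) : Prop :=
  symmetric e /\ irreflexive e.

(* Blowup H (x) J_t : vertices (v, i) with v in V(H), i in [t];
   (u,i) ~ (v,j) iff uv in E(H), or u = v and i <> j. *)
Definition blowup_adj (T : finType) (e : rel T) (t : nat) : rel (T * 'I_t) :=
  fun x y => e x.1 y.1 || ((x.1 == y.1) && (x.2 != y.2)).

Definition is_path (V : finType) (g : rel V) (x y : V) (p : seq V) : Prop :=
  exists rest, p = x :: rest /\ path g x rest /\ last x rest = y /\ uniq p.

(* A matching on X, listed as a sequence of (oriented representatives of)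
   unordered pairs {x,y} with x <> y, x, y in X, and all pairs disjoint. *)
Definition matching_on (V : finType) (X : {set V}) (M : seq (V * V)) : Prop :=
  (forall m, m \in M -> [/\ m.1 \in X, m.2 \in X & m.1 != m.2]) /\
  uniq (flatten [seq [:: m.1; m.2] | m <- M]).

Definition uncongested_linkage (V : finType) (g : rel V) (M : seq (V * V))
    (Ps : seq (seq V)) : Prop :=
  size Ps = size M /\
  (forall (k : nat) (d : V * V), k < size M ->
     is_path g (nth d M k).1 (nth d M k).2 (nth [::] Ps k)) /\
  (forall v k l, k < size Ps -> l < size Ps ->
     v \in nth [::] Ps k -> v \in nth [::] Ps l -> k = l).

Definition matching_linked (V : finType) (g : rel V) (X : {set V}) : Prop :=
  forall M : seq (V * V), matching_on X M ->
    exists Ps : seq (seq V), uncongested_linkage g M Ps.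

Definition capacity_set (R : realType) (T : finType) (e : rel T) : set R :=
  fun c => (0 < c)%R /\ exists N : nat, forall t : nat, (N <= t)%N ->
    exists X : {set T * 'I_t},
      (#|X|%:Z = Num.floor (c * t%:R)%R)%R /\ matching_linked (@blowup_adj T e t) X.

Definition linkage_capacity (R : realType) (T : finType) (e : rel T) : R :=
  sup (@capacity_set R T e).

From HB Require Import structures.
From mathcomp Require Import all_boot all_order all_algebra.
From mathcomp Require Import boolp classical_sets reals.
From mathcomp Require Import zify ring lra.
Import Order.TTheory GRing.Theory Num.Theory.
Set Implicit Arguments. Unset Strict Implicit. Unset Printing Implicit Defensive.

(* Fix d > 0 and t >= 3dq.  Inside H (x) J_t stack 3d copies of H (x) J_q, the
   l-th one using the indices in [lq, (l+1)q), and let Y be the union of the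
   copies of X in the first d blocks, so |Y| = d|X|.  A pair of vertices of Y
   lying over the same vertex of H is an edge.  Every other pair of a matching
   on Y projects to a pair of X; two pairs conflict when their projections
   meet.  A vertex of X has only d copies in Y, so a pair conflicts with fewer
   than 2d pairs and the conflict graph is greedily 2d-colourable.  Each colour
   class projects to a matching on X, which is linked inside its own spare
   copy; the endpoints attach to that copy because (v, i) is adjacent to every
   (v, j) with j <> i.  Hence Y is matching-linked, and every c < |X|/(3q)
   belongs to the capacity set. *)

Lemma mem_flatten_pairs (V : eqType) (d : V * V) (M : seq (V * V)) k z :
  k < size M -> z \in [:: (nth d M k).1; (nth d M k).2] ->
  z \in flatten [seq [:: m.1; m.2] | m <- M].
Proof.
move=> Hk Hz; apply/flattenP; exists [:: (nth d M k).1; (nth d M k).2] => //.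
by apply/mapP; exists (nth d M k) => //; apply: mem_nth.
Qed.

Lemma flatten_pairs_uniq_idx (V : eqType) (d : V * V) (M : seq (V * V)) k l z :
  uniq (flatten [seq [:: m.1; m.2] | m <- M]) -> k < size M -> l < size M ->
  z \in [:: (nth d M k).1; (nth d M k).2] ->
  z \in [:: (nth d M l).1; (nth d M l).2] -> k = l.
Proof.
elim: M k l => [|m M IH] [|k] [|l] //=.
- move=> /andP[H1 /andP[H2 _]] _ Hl Hz1 Hz2.
  have := mem_flatten_pairs Hl Hz2; move: Hz1; rewrite !inE.
  by case/orP=> /eqP ->; rewrite ?(negbTE H2);
    [move: H1; rewrite inE negb_or => /andP[_ /negbTE ->]|].
- move=> /andP[H1 /andP[H2 _]] Hk _ Hz1 Hz2.
  have := mem_flatten_pairs Hk Hz1; move: Hz2; rewrite !inE.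
  by case/orP=> /eqP ->; rewrite ?(negbTE H2);
    [move: H1; rewrite inE negb_or => /andP[_ /negbTE ->]|].
- by move=> /andP[_ /andP[_ HU]] Hk Hl Hz1 Hz2; congr S; apply: (IH k l HU).
Qed.

Lemma uniq_flatten_pairs (A V : eqType) (f g : A -> V) (s : seq A) :
  uniq s -> (forall k, k \in s -> f k != g k) ->
  (forall k l, k \in s -> l \in s -> k != l ->
     (f k \notin [:: f l; g l]) && (g k \notin [:: f l; g l])) ->
  uniq (flatten [seq [:: f k; g k] | k <- s]).
Proof.
elim: s => [|a s IH] //= /andP[Ha Hs] Hfg Hd.
have Hnot z : z \in [:: f a; g a] -> z \notin flatten [seq [:: f k; g k] | k <- s].
  move=> Hz; apply/negP => /flattenP [w /mapP [l Hl ->] Hzl].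
  have Hal : a != l by apply/negP => /eqP Hal; move: Ha; rewrite Hal Hl.
  have /andP[H1 H2] := Hd a l (mem_head _ _) (mem_behead (s:=a::s) Hl) Hal.
  by move: Hz; rewrite !inE => /orP[] /eqP Hz; subst z; [move: H1|move: H2];
    rewrite Hzl.
have Hfa := Hnot _ (mem_head _ _).
have Hga : g a \notin flatten [seq [:: f k; g k] | k <- s].
  by apply: Hnot; rewrite !inE eqxx orbT.
rewrite inE negb_or Hfg ?mem_head // Hfa Hga /=.
apply: IH => // [k Hk|k l Hk Hl]; first by apply: Hfg; rewrite inE Hk orbT.
by apply: Hd; rewrite inE ?Hk ?Hl orbT.
Qed.

Lemma greedy_colouring (K : nat) (conflict : rel nat) (s : seq nat) :
  0 < K -> symmetric conflict ->
  (forall i, i \in s -> count (conflict i) s < K) ->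
  exists col : nat -> 'I_K, forall i j, i \in s -> j \in s -> i != j ->
    conflict i j -> col i != col j.
Proof.
move=> HK Hsym; elim: s => [|a s IH] Hb; first by exists (fun _ => Ordinal HK).
have [col Hcol] : exists col : nat -> 'I_K, forall i j, i \in s -> j \in s ->
    i != j -> conflict i j -> col i != col j.
  apply: IH => i Hi; apply: leq_ltn_trans (Hb i (mem_behead (s:=a::s) Hi)).
  by rewrite /=; lia.
set used := [seq col j | j <- s & conflict a j].
have [c Hc] : exists c : 'I_K, c \notin used.
  case: (pickP [pred c : 'I_K | c \notin used]) => [c Hc|Hall]; first by exists c.
  have : size (enum 'I_K) <= size used.
    apply: uniq_leq_size; first exact: enum_uniq.
    by move=> c _; move: (Hall c) => /= /negbFE.
  rewrite size_enum_ord size_map size_filter => Hle.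
  have /= Ha := Hb a (mem_head _ _).
  by have := leq_ltn_trans Hle (leq_ltn_trans (leq_addl _ _) Ha); rewrite ltnn.
exists (fun x => if x == a then c else col x) => i j Hi Hj Hij Hc'.
case: (eqVneq i a) => [Eia|Nia]; case: (eqVneq j a) => [Eja|Nja].
- by move: Hij; rewrite Eia Eja eqxx.
- subst i; have Hj' : j \in s by move: Hj; rewrite inE (negbTE Nja).
  apply/negP => /eqP Ecol; move: Hc; rewrite Ecol; apply/negP/negPn.
  by apply/mapP; exists j => //; rewrite mem_filter Hc' Hj'.
- subst j; have Hi' : i \in s by move: Hi; rewrite inE (negbTE Nia).
  apply/negP => /eqP Ecol; move: Hc; rewrite -Ecol; apply/negP/negPn.
  by apply/mapP; exists i => //; rewrite mem_filter Hsym Hc' Hi'.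
- apply: Hcol => //; first by move: Hi; rewrite inE (negbTE Nia).
  by move: Hj; rewrite inE (negbTE Nja).
Qed.

Lemma blowup_adj_same_vertex (T : finType) (e : rel T) (t : nat)
    (x y : T * 'I_t) :
  x.1 = y.1 -> x != y -> blowup_adj e x y.
Proof.
case: x y => [a i] [b j] /= <- Hxy; rewrite /blowup_adj /= eqxx /=.
by apply/orP; right; apply: contra Hxy => /eqP ->.
Qed.

Lemma matching_linked_subset (V : finType) (g : rel V) (A B : {set V}) :
  A \subset B -> matching_linked g B -> matching_linked g A.
Proof.
move=> HAB HB M [H1 H2]; apply: HB; split => // m Hm.
by have [Ha Hb Hn] := H1 m Hm; split => //; apply: (fintype.subsetP HAB).
Qed.

Lemma exists_subset_card (V : finType) (A : {set V}) m : m <= #|A| ->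
  exists2 B : {set V}, B \subset A & #|B| = m.
Proof.
move=> Hm; exists [set x in take m (enum A)].
  by apply/fintype.subsetP => x; rewrite inE => /mem_take; rewrite mem_enum.
rewrite cardsE (card_uniqP (take_uniq _ (enum_uniq _))) size_take -cardE.
by case: ltngtP Hm => //; lia.
Qed.

Section Stacking.
Variables (T : finType) (e : rel T) (q t d : nat).
Local Notation Vs := (T * 'I_q.+1)%type.
Local Notation Vb := (T * 'I_t.+1)%type.
Hypothesis three_blocks_fit : 3 * d * q.+1 <= t.+1.

Definition lift (l : nat) (x : Vs) : Vb := (x.1, inord (l * q.+1 + x.2)).
Definition layer (z : Vb) := z.2 %/ q.+1.
Definition proj (z : Vb) : Vs := (z.1, inord (z.2 %% q.+1)).

Lemma lift_idx_bound l (x : Vs) : l < 3 * d -> l * q.+1 + x.2 <= t.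
Proof.
move=> Hl; have Hx := ltn_ord x.2.
have : l.+1 * q.+1 <= 3 * d * q.+1 by rewrite leq_mul2r Hl orbT.
by rewrite mulSn; lia.
Qed.

Lemma val_lift2 l x : l < 3 * d -> val (lift l x).2 = l * q.+1 + x.2.
Proof. by move=> Hl; rewrite /= inordK // ltnS lift_idx_bound. Qed.

Lemma layer_lift l x : l < 3 * d -> layer (lift l x) = l.
Proof. by move=> Hl; rewrite /layer val_lift2 // divnMDl // divn_small ?addn0. Qed.

Lemma proj_lift l x : l < 3 * d -> proj (lift l x) = x.
Proof.
move=> Hl; rewrite /proj val_lift2 // modnMDl modn_small // inord_val.
by case: x.
Qed.

Lemma val_proj2 z : val (proj z).2 = z.2 %% q.+1.
Proof. by rewrite /= inordK // ltnS -ltnS ltn_pmod. Qed.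

Lemma proj_layer_inj z1 z2 : proj z1 = proj z2 -> layer z1 = layer z2 -> z1 = z2.
Proof.
case: z1 z2 => [v1 s1] [v2 s2] Hp Hl.
have -> : v1 = v2 by move: Hp => /(congr1 fst).
have Emod : s1 %% q.+1 = s2 %% q.+1.
  by move: (val_proj2 (v1, s1)) (val_proj2 (v2, s2)); rewrite Hp => -> ->.
congr pair; apply: val_inj => /=.
by rewrite (divn_eq s1 q.+1) (divn_eq s2 q.+1) Emod; move: Hl; rewrite /layer /= => ->.
Qed.

Lemma lift_inj l1 l2 x1 x2 : l1 < 3 * d -> l2 < 3 * d ->
  lift l1 x1 = lift l2 x2 -> l1 = l2 /\ x1 = x2.
Proof.
move=> H1 H2 E; split; first by rewrite -(layer_lift x1 H1) -(layer_lift x2 H2) E.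
by rewrite -(proj_lift x1 H1) -(proj_lift x2 H2) E.
Qed.

Lemma lift_adj l x y : l < 3 * d ->
  blowup_adj e x y -> blowup_adj e (lift l x) (lift l y).
Proof.
move=> Hl; rewrite /blowup_adj /= => /orP[->//|/andP[/eqP E Hxy]].
apply/orP; right; rewrite E eqxx /=.
apply: contra Hxy => /eqP /(congr1 val); rewrite !val_lift2 // => /addnI Exy.
by apply/eqP/val_inj.
Qed.

Lemma adj_lift_proj z l : layer z != l -> l < 3 * d ->
  blowup_adj e z (lift l (proj z)) /\ blowup_adj e (lift l (proj z)) z.
Proof.
move=> Hz Hl; have Nz : z != lift l (proj z).
  by apply: contra Hz => /eqP {1}->; rewrite layer_lift.
by split; apply: blowup_adj_same_vertex; rewrite // eq_sym.
Qed.

Definition stack (X : {set Vs}) : {set Vb} :=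
  [set z | (layer z < d) && (proj z \in X)].

Lemma card_stack (X : {set Vs}) : d * #|X| <= #|stack X|.
Proof.
pose F (p : 'I_d * Vs) := lift p.1 p.2.
have lt3d (l : 'I_d) : (l : nat) < 3 * d by have := ltn_ord l; lia.
have F_inj : injective F.
  move=> [l1 x1] [l2 x2] /(lift_inj (lt3d l1) (lt3d l2)) /= [/val_inj -> ->].
  by [].
have <- : #|F @: finset.setX [set: 'I_d] X| = d * #|X|.
  by rewrite card_imset // cardsX cardsT card_ord.
apply: subset_leq_card; apply/fintype.subsetP => z /imsetP [[l x]].
rewrite inE /= => /andP[_ Hx] ->.
by rewrite inE /F /= layer_lift // proj_lift // Hx ltn_ord.
Qed.

Section Routing.
Variables (X : {set Vs}) (M : seq (Vb * Vb)) (m0 : Vb * Vb).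
Hypothesis M_matching : matching_on (stack X) M.

Definition src k := (nth m0 M k).1.
Definition tgt k := (nth m0 M k).2.
Definition vertical k := (src k).1 == (tgt k).1.
Definition meets (x : Vs) k := (proj (src k) == x) || (proj (tgt k) == x).
Definition conflict k l := ~~ vertical k && ~~ vertical l &&
  [|| proj (src k) == proj (src l), proj (src k) == proj (tgt l),
      proj (tgt k) == proj (src l) | proj (tgt k) == proj (tgt l)].

Lemma ends_in_stack k : k < size M ->
  [/\ src k \in stack X, tgt k \in stack X & src k != tgt k].
Proof. by move=> Hk; apply: M_matching.1; apply: mem_nth. Qed.

Lemma ends_layer_lt k : k < size M -> layer (src k) < d /\ layer (tgt k) < d.
Proof.
move=> /ends_in_stack [Hu Hw _].
by move: Hu Hw; rewrite !inE => /andP[-> _] /andP[-> _].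
Qed.

Lemma ends_idx_inj k l z : k < size M -> l < size M ->
  z \in [:: src k; tgt k] -> z \in [:: src l; tgt l] -> k = l.
Proof. exact: flatten_pairs_uniq_idx M_matching.2. Qed.

Lemma conflict_sym : symmetric conflict.
Proof.
move=> k l; rewrite /conflict; case: (vertical k); case: (vertical l) => //=.
by apply/idP/idP => /or4P [] /eqP ->; rewrite eqxx ?orbT.
Qed.

(* The pairs meeting x are told apart by the layer of their endpoint over x. *)
Lemma count_meets x : count (meets x) (iota 0 (size M)) <= d.
Proof.
pose end_at k := if proj (src k) == x then src k else tgt k.
have end_atE k : meets x k -> proj (end_at k) = x.
  by rewrite /meets /end_at; case: ifP => [/eqP|_ /eqP].
have mem_end_at k : end_at k \in [:: src k; tgt k].
  by rewrite /end_at; case: ifP; rewrite !inE eqxx ?orbT.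
rewrite -size_filter -(size_map (layer \o end_at)) -[d](size_iota 0).
apply: uniq_leq_size.
  rewrite map_inj_in_uniq ?filter_uniq ?iota_uniq // => k l.
  rewrite !mem_filter !mem_iota /= => /andP[Hkx Hk] /andP[Hlx Hl] El.
  apply: (ends_idx_inj Hk Hl (mem_end_at k)).
  by rewrite (proj_layer_inj _ El) ?end_atE.
move=> y /mapP [k]; rewrite mem_filter mem_iota /= => /andP[_ Hk] ->.
by have [Hu Hw] := ends_layer_lt Hk; rewrite mem_iota /end_at; case: ifP.
Qed.

Lemma count_conflict i : i \in iota 0 (size M) ->
  count (conflict i) (iota 0 (size M)) < 2 * d.
Proof.
move=> Hi; set mu := meets (proj (src i)); set mw := meets (proj (tgt i)).
have Hle : count (conflict i) (iota 0 (size M)) <= count (predU mu mw) (iota 0 (size M)).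
  apply: sub_count => l; rewrite /conflict /mu /mw /meets /= => /andP[_].
  by case/or4P => /eqP ->; rewrite eqxx ?orbT.
have HI : 0 < count (predI mu mw) (iota 0 (size M)).
  by rewrite -has_count; apply/hasP; exists i => //=; rewrite /mu /mw /meets !eqxx ?orbT.
have := count_predUI mu mw (iota 0 (size M)).
have Cu : count mu (iota 0 (size M)) <= d := count_meets _.
have Cw : count mw (iota 0 (size M)) <= d := count_meets _.
by lia.
Qed.

Variable col : nat -> 'I_(2 * d).
Hypothesis col_proper : forall i j, i \in iota 0 (size M) -> j \in iota 0 (size M) ->
  i != j -> conflict i j -> col i != col j.

Definition colour_class (c : 'I_(2 * d)) :=
  [seq k <- iota 0 (size M) | ~~ vertical k && (col k == c)].
Definition projected_class c := [seq (proj (src k), proj (tgt k)) | k <- colour_class c].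

Lemma mem_colour_class c k :
  (k \in colour_class c) = [&& k < size M, ~~ vertical k & col k == c].
Proof. by rewrite mem_filter mem_iota add0n /= andbC. Qed.

Lemma proj_ends_neq k : ~~ vertical k -> proj (src k) != proj (tgt k).
Proof. by apply: contra; rewrite /vertical => /eqP /(congr1 fst) /= ->. Qed.

Lemma projected_class_matching c : matching_on X (projected_class c).
Proof.
split.
  move=> m /mapP [k]; rewrite mem_colour_class => /and3P[Hk Hv _] -> /=.
  have [Hu Hw _] := ends_in_stack Hk; move: Hu Hw; rewrite !inE.
  by move=> /andP[_ ->] /andP[_ ->]; split => //; apply: proj_ends_neq.
rewrite -map_comp; apply: uniq_flatten_pairs.
- by rewrite filter_uniq ?iota_uniq.
- by move=> k; rewrite mem_colour_class => /and3P[_ Hv _]; apply: proj_ends_neq.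
- move=> k l; rewrite !mem_colour_class.
  move=> /and3P[Hk Hvk /eqP Hck] /and3P[Hl Hvl /eqP Hcl] Hkl /=.
  have : ~~ conflict k l.
    apply: contraL (col_proper _ _ Hkl) _; rewrite ?mem_iota //.
    by rewrite Hck Hcl eqxx.
  by rewrite /conflict Hvk Hvl /= !negb_or => /and4P[-> -> -> ->].
Qed.

Variable Ps : 'I_(2 * d) -> seq (seq Vs).
Hypothesis Ps_linkage : forall c,
  uncongested_linkage (@blowup_adj T e q.+1) (projected_class c) (Ps c).

Definition spare_layer k := d + col k.
Definition projected_path k := nth [::] (Ps (col k)) (index k (colour_class (col k))).
Definition route k := if vertical k then [:: src k; tgt k]
  else src k :: rcons (map (lift (spare_layer k)) (projected_path k)) (tgt k).

Lemma spare_layer_lt k : spare_layer k < 3 * d.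
Proof. by have := ltn_ord (col k); rewrite /spare_layer; lia. Qed.

Lemma index_class_lt k : k < size M -> ~~ vertical k ->
  index k (colour_class (col k)) < size (projected_class (col k)).
Proof. by move=> Hk Hv; rewrite size_map index_mem mem_colour_class Hk Hv eqxx. Qed.

Lemma projected_path_is_path k : k < size M -> ~~ vertical k ->
  is_path (@blowup_adj T e q.+1) (proj (src k)) (proj (tgt k)) (projected_path k).
Proof.
move=> Hk Hv; have [_ [Hp _]] := Ps_linkage (col k).
have := Hp _ (proj (src k), proj (tgt k)) (index_class_lt Hk Hv).
by rewrite (nth_map k) ?nth_index ?mem_colour_class ?Hk ?Hv ?eqxx // -(size_map
  (fun k => (proj (src k), proj (tgt k)))) index_class_lt.
Qed.

Lemma route_is_path k : k < size M ->
  is_path (@blowup_adj T e t.+1) (src k) (tgt k) (route k).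
Proof.
move=> Hk; have [_ _ Hst] := ends_in_stack Hk; have [Ls Lt] := ends_layer_lt Hk.
rewrite /route; case: ifP => Hv.
  exists [:: tgt k]; split; [by []|split; last by rewrite /= inE Hst].
  by rewrite /= andbT blowup_adj_same_vertex //; apply/eqP.
have [rest [EP [Hp [Hl Hun]]]] := projected_path_is_path Hk (negbT Hv).
set l := spare_layer k; have Hlt : l < 3 * d := spare_layer_lt k.
have off_spare z : layer z < d -> layer z != l.
  by move=> Hz; rewrite neq_ltn (leq_trans Hz) ?leq_addr.
exists (rcons (map (lift l) (projected_path k)) (tgt k)); split => //; split; last split.
- have [Hs _] := adj_lift_proj (off_spare _ Ls) Hlt.
  have [_ Ht] := adj_lift_proj (off_spare _ Lt) Hlt.
  rewrite rcons_path EP /= Hs path_map last_map Hl Ht andbT.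
  by apply: sub_path Hp => x y; apply: lift_adj.
- by rewrite last_rcons.
- have notin_lift z : layer z < d -> z \notin map (lift l) (projected_path k).
    move=> Hz; apply/mapP => -[y _ Ez].
    by move: Hz; rewrite Ez layer_lift // /l /spare_layer; lia.
  rewrite /= rcons_uniq mem_rcons !inE negb_or Hst !notin_lift //=.
  by rewrite map_inj_uniq // => x y /(lift_inj Hlt Hlt) [].
Qed.

Lemma mem_route k z : z \in route k ->
  z \in [:: src k; tgt k] \/
  (~~ vertical k /\ z \in map (lift (spare_layer k)) (projected_path k)).
Proof.
rewrite /route; case: ifP => Hv; first by left.
rewrite inE mem_rcons inE => /or3P [H|H|H]; [left|left|right] => //.
- by rewrite inE H.
- by rewrite !inE H orbT.
Qed.

Lemma route_disjoint z k l : k < size M -> l < size M ->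
  z \in route k -> z \in route l -> k = l.
Proof.
have end_layer j : j < size M -> z \in [:: src j; tgt j] -> layer z < d.
  by move=> Hj; have [Hs Ht] := ends_layer_lt Hj; rewrite !inE => /orP[] /eqP ->.
have lift_layer j : z \in map (lift (spare_layer j)) (projected_path j) -> d <= layer z.
  by move=> /mapP [y _ ->]; rewrite layer_lift ?spare_layer_lt // leq_addr.
move=> Hk Hl /mem_route [Ek|[Vk Ek]] /mem_route [El|[Vl El]].
- exact: ends_idx_inj Ek El.
- by have := end_layer k Hk Ek; rewrite ltnNge (lift_layer l El).
- by have := end_layer l Hl El; rewrite ltnNge (lift_layer k Ek).
move: Ek El => /mapP [x Hx ->] /mapP [y Hy].
move=> /(lift_inj (spare_layer_lt _) (spare_layer_lt _)) [Ec Exy].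
have Ecol : col k = col l by apply: val_inj; move: Ec => /addnI.
subst y; move: Hx Hy; rewrite /projected_path Ecol => Hx Hy.
have [Hs [_ Hdisj]] := Ps_linkage (col l).
have Hik := index_class_lt Hk Vk; have Hil := index_class_lt Hl Vl.
rewrite Ecol -Hs in Hik; rewrite -Hs in Hil.
have Ej := Hdisj x _ _ Hik Hil Hx Hy.
have Mk : k \in colour_class (col l) by rewrite mem_colour_class Hk Vk Ecol eqxx.
have Ml : l \in colour_class (col l) by rewrite mem_colour_class Hl Vl eqxx.
by rewrite -(nth_index 0 Mk) Ej nth_index.
Qed.

End Routing.

Lemma stack_matching_linked (X : {set Vs}) : 0 < d ->
  matching_linked (@blowup_adj T e q.+1) X ->
  matching_linked (@blowup_adj T e t.+1) (stack X).
Proof.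
move=> d_gt0 X_linked M M_matching.
case: M M_matching => [|m0 M'] M_matching; first by exists [::].
set M := m0 :: M' in M_matching *.
have K_gt0 : 0 < 2 * d by lia.
have [col col_proper] := greedy_colouring (s := iota 0 (size M))
  K_gt0 (conflict_sym M m0) (count_conflict m0 M_matching).
have [Ps Ps_linkage] := choice (fun c =>
  X_linked _ (projected_class_matching (m0 := m0) M_matching col_proper c)).
exists (map (route M m0 col Ps) (iota 0 (size M))).
split; first by rewrite size_map size_iota.
split=> [k m Hk|z k l].
  rewrite (nth_map 0) ?size_iota // nth_iota // add0n (set_nth_default m0 m Hk).
  exact: (route_is_path M_matching Ps_linkage Hk).
rewrite size_map size_iota => Hk Hl.
rewrite !(nth_map 0) ?size_iota // !nth_iota // !add0n.
exact: (route_disjoint M_matching Ps_linkage).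
Qed.

End Stacking.

Lemma matching_linked_of_card (T : finType) (e : rel T) (q t d m : nat)
    (X : {set T * 'I_q.+1}) :
  0 < d -> 3 * d * q.+1 <= t.+1 -> matching_linked (@blowup_adj T e q.+1) X ->
  m <= d * #|X| ->
  exists Y : {set T * 'I_t.+1}, #|Y| = m /\ matching_linked (@blowup_adj T e t.+1) Y.
Proof.
move=> d_gt0 fit X_linked Hm.
have [Y sub_Y card_Y] := exists_subset_card (leq_trans Hm (card_stack fit X)).
by exists Y; split=> //; apply: matching_linked_subset sub_Y _;
  apply: stack_matching_linked.
Qed.

Local Open Scope ring_scope.

Section Capacity.
Variables (R : realType) (T : finType) (e : rel T).

Lemma capacity_set_ubound : has_ubound (@capacity_set R T e).
Proof.
exists (#|T|%:R + 1); apply/ubP => c [c_gt0 [N HN]].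
have [Y [card_Y _]] := HN N.+1 (leqnSn N).
have HY : (#|Y|%:R : R) <= #|T|%:R * N.+1%:R.
  by rewrite -natrM ler_nat; have := max_card (mem Y); rewrite card_prod card_ord.
have /andP[_] := floor_itv (c * N.+1%:R); rewrite -card_Y intrD => Hfloor.
have N1_ge1 : (1 : R) <= N.+1%:R by rewrite ler1n.
suff : c * N.+1%:R < (#|T|%:R + 1) * N.+1%:R by rewrite ltr_pM2r ?ltr0n // => /ltW.
by nra.
Qed.

Lemma linkage_capacity_ge0 : 0 <= @linkage_capacity R T e.
Proof.
have [[c Sc]|no_c] := EM (exists c, @capacity_set R T e c).
  exact: le_trans (ltW Sc.1) (sup_upper_bound (conj (ex_intro _ c Sc)
    capacity_set_ubound) Sc).
by rewrite /linkage_capacity sup_out // => -[].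
Qed.

Lemma linkage_capacity_ge (a : R) :
  (forall c, 0 < c -> c < a -> @capacity_set R T e c) ->
  a <= @linkage_capacity R T e.
Proof.
move=> S_interval; rewrite leNgt; apply/negP => lt_sup_a.
have sup_ge0 := linkage_capacity_ge0.
set c := (linkage_capacity R e + a) / 2.
have Sc : @capacity_set R T e c by apply: S_interval; rewrite /c; lra.
have : c <= linkage_capacity R e.
  exact: (sup_upper_bound (conj (ex_intro _ c Sc) capacity_set_ubound)).
by rewrite /c; lra.
Qed.

(* With Q n / (n - c Q) <= t we get c Q t <= n (t - Q) <= Q (t %/ Q) n. *)
Lemma eventually_le_divn_mul (c : R) (Q n : nat) : (0 < Q)%N ->
  c * Q%:R < n%:R -> exists N, forall t, (N <= t)%N -> c * t%:R <= (t %/ Q * n)%:R.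
Proof.
move=> Q_gt0 cQ_lt_n; set gap := n%:R - c * Q%:R.
have gap_gt0 : 0 < gap by rewrite subr_gt0.
exists (Num.bound ((Q * n)%:R / gap)) => t Ht.
have Qn_lt : (Q * n)%:R < t%:R * gap.
  rewrite -ltr_pdivrMr //; apply: lt_le_trans (archi_boundP _) _.
    by rewrite divr_ge0 ?ler0n ?ltW.
  by rewrite ler_nat.
have Et : (t%:R : R) = (t %/ Q)%:R * Q%:R + (t %% Q)%:R.
  by rewrite -natrM -natrD -divn_eq.
have mod_lt : ((t %% Q)%:R : R) + 1 <= Q%:R by rewrite natr1 ler_nat ltn_pmod.
have Q_pos : (0 : R) < Q%:R by rewrite ltr0n.
have n_ge0 : (0 : R) <= n%:R by [].
suff : c * t%:R * Q%:R <= (t %/ Q * n)%:R * Q%:R by rewrite ler_pM2r.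
rewrite natrM; rewrite natrM /gap in Qn_lt; nra.
Qed.

Lemma capacity_set_of_linked (q : nat) (X : {set T * 'I_q.+1}) (c : R) :
  matching_linked (@blowup_adj T e q.+1) X -> 0 < c ->
  c * (3 * q.+1)%:R < #|X|%:R -> @capacity_set R T e c.
Proof.
move=> X_linked c_gt0 c_small; split => //.
have Q_gt0 : (0 < 3 * q.+1)%N by [].
have [N HN] := eventually_le_divn_mul Q_gt0 c_small.
exists (maxn (3 * q.+1) N) => -[|t]; rewrite geq_max => /andP[Ht HtN] //.
set d := (t.+1 %/ (3 * q.+1))%N.
have d_gt0 : (0 < d)%N by rewrite divn_gt0.
have fit : (3 * d * q.+1 <= t.+1)%N by rewrite mulnAC mulnC leq_divM.
have floor_ge0 : 0 <= Num.floor (c * t.+1%:R) by rewrite floor_ge0 mulr_ge0 ?ltW.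
set m := `|Num.floor (c * t.+1%:R)|%N.
have Hm : m%:Z = Num.floor (c * t.+1%:R) by rewrite gez0_abs.
have m_le : (m <= d * #|X|)%N.
  rewrite -(ler_nat R) /m natr_absz ger0_norm //.
  exact: le_trans (floor_le _) (HN _ HtN).
have [Y [card_Y Y_linked]] := matching_linked_of_card d_gt0 fit X_linked m_le.
by exists Y; rewrite card_Y Hm.
Qed.

End Capacity.

Theorem mainTheorem6 (R : realType) (T : finType) (e : rel T) (q : nat)
    (X : {set T * 'I_q}) :
  simple_graph e -> (0 < q)%N ->
  matching_linked (@blowup_adj T e q) X ->
  (1 / 3) * (#|X|%:R / q%:R) <= @linkage_capacity R T e.
Proof.
move=> _; case: q X => [|q] X // _ X_linked.
apply: linkage_capacity_ge => c c_gt0 c_lt.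
apply: capacity_set_of_linked X_linked c_gt0 _; move: c_lt.
have -> : 1 / 3 * (#|X|%:R / q.+1%:R) = #|X|%:R / (3 * q.+1)%:R :> R.
  by rewrite natrM; field; rewrite addrC natr1 pnatr_eq0.
by rewrite ltr_pdivlMr ?ltr0n.
Qed.
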